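(* Let $n\geq 0$, $m\geq 2$ with $m$ even, and $1\leq a\leq 9$. Then $B_n \neq a\left(\frac{10^m-1}{9}\right)$. Consequently, if $B_n = a\frac{10^m-1}{9}$ for some $m\geq 2$ and $1\le a\le 9$, then $m$ is odd.
   Context: The balancing sequence $(B_n)_{n\geq 0}$ is defined by $B_0=0$, $B_1=1$ and $B_{n+1}=6B_n-B_{n-1}$ for $n\geq 1$. For $1\le a\le 9$ and $m\ge 1$, the number $a\frac{10^m-1}{9}$ is the decimal integer consisting of $m$ copies of the digit $a$. *)

From Stdlib Require Import ZArith.
Open Scope Z_scope.

Fixpoint balancing (n : nat) : Z :=
  match n with
  | O => 0
  | S O => 1
  | S ((S k) as k1) => 6 * balancing k1 - balancing k
  end.

(* The integer consisting of m copies of digit a: a * (10^m - 1)/9.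
   (10^m - 1 is divisible by 9, so Z.div is exact here.) *)
Definition repdigit (a : Z) (m : nat) : Z := a * ((10 ^ Z.of_nat m - 1) / 9).

(* Balancing numbers are 12-periodic modulo 110, and a check of one period shows
   that [11 | B_n] forces [110 | B_n].  For even [m >= 2] the repdigit
   [a (10^m - 1)/9] is [11 a] modulo 110, which is divisible by 11 but, for
   [1 <= a <= 9], not by 110. *)
From Stdlib Require Import ZArith Arith Lia.
Open Scope Z_scope.

Lemma balancing_SS (n : nat) :
  balancing (S (S n)) = 6 * balancing (S n) - balancing n.
Proof. reflexivity. Qed.

Lemma recurrence_divide (d : Z) (u : nat -> Z) :
  (forall n, u (S (S n)) = 6 * u (S n) - u n) ->
  (d | u O) -> (d | u 1%nat) -> forall n, (d | u n).
Proof.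
  intros rec d0 d1 n.
  enough (both : (d | u n) /\ (d | u (S n))) by exact (proj1 both).
  induction n as [|n [dn dSn]]; [now split|].
  split; [exact dSn|].
  rewrite rec. apply Z.divide_sub_r; [apply Z.divide_mul_r|]; assumption.
Qed.

Lemma balancing_add12_mod110 (n : nat) :
  (110 | balancing (n + 12) - balancing n).
Proof.
  apply (recurrence_divide 110 (fun n => balancing (n + 12) - balancing n)).
  - intros k. replace (S (S k) + 12)%nat with (S (S (k + 12))) by lia.
    replace (S k + 12)%nat with (S (k + 12)) by lia.
    rewrite !balancing_SS. ring.
  - apply Z.mod_divide; [lia | reflexivity].
  - apply Z.mod_divide; [lia | reflexivity].
Qed.

Lemma balancing_mod110_periodic (q r : nat) :
  (110 | balancing (12 * q + r) - balancing r).
Proof.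
  induction q as [|q IHq]; [rewrite Z.sub_diag; apply Z.divide_0_r|].
  replace (12 * S q + r)%nat with ((12 * q + r) + 12)%nat by lia.
  replace (balancing (12 * q + r + 12) - balancing r)
    with ((balancing (12 * q + r + 12) - balancing (12 * q + r))
          + (balancing (12 * q + r) - balancing r)) by ring.
  apply Z.divide_add_r; [apply balancing_add12_mod110 | exact IHq].
Qed.

Lemma balancing_divide11_divide110 (n : nat) :
  (11 | balancing n) -> (110 | balancing n).
Proof.
  intros div11.
  pose proof (Nat.div_mod_eq n 12) as n_eq.
  set (r := (n mod 12)%nat) in n_eq.
  assert (r_lt : (r < 12)%nat) by (apply Nat.mod_upper_bound; lia).
  pose proof (balancing_mod110_periodic (n / 12) r) as period.
  rewrite <- n_eq in period.
  assert (period11 : (11 | balancing n - balancing r)).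
  { apply (Z.divide_trans _ 110); [exists 10; reflexivity | exact period]. }
  assert (div11_r : (11 | balancing r)).
  { replace (balancing r) with (balancing n - (balancing n - balancing r)) by ring.
    now apply Z.divide_sub_r. }
  assert (div110_r : (110 | balancing r)).
  { apply Z.mod_divide in div11_r; [|lia]. apply Z.mod_divide; [lia|].
    revert div11_r.
    clearbody r. clear -r_lt.
    do 12 (destruct r as [|r]; [vm_compute; congruence|]). lia. }
  replace (balancing n) with ((balancing n - balancing r) + balancing r) by ring.
  now apply Z.divide_add_r.
Qed.

Lemma pow10_even_mod990 (k : nat) :
  (1 <= k)%nat -> 10 ^ (2 * Z.of_nat k) mod 990 = 100.
Proof.
  induction k as [|k IHk]; intros k_pos; [lia|].
  destruct k as [|k]; [reflexivity|].
  rewrite Nat2Z.inj_succ, Z.mul_succ_r, Z.pow_add_r by lia.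
  rewrite Z.mul_mod, IHk by lia. reflexivity.
Qed.

Lemma repdigit_even_mod110 (a : Z) (k : nat) :
  (1 <= k)%nat -> repdigit a (2 * k) mod 110 = 11 * a mod 110.
Proof.
  intros k_pos. unfold repdigit. rewrite Nat2Z.inj_mul.
  pose proof (Z.div_mod (10 ^ (2 * Z.of_nat k)) 990 ltac:(lia)) as pow_eq.
  rewrite pow10_even_mod990 in pow_eq by exact k_pos.
  set (q := 10 ^ (2 * Z.of_nat k) / 990) in pow_eq.
  change (Z.of_nat 2) with 2. rewrite pow_eq.
  replace (990 * q + 100 - 1) with ((110 * q + 11) * 9) by ring.
  rewrite Z.div_mul by lia.
  replace (a * (110 * q + 11)) with (11 * a + (a * q) * 110) by ring.
  apply Z_mod_plus_full.
Qed.

Theorem mainTheorem2 :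
  (forall (n m : nat) (a : Z),
      (2 <= m)%nat -> Nat.Even m -> 1 <= a <= 9 ->
      balancing n <> repdigit a m)
  /\
  (forall (n m : nat) (a : Z),
      (2 <= m)%nat -> 1 <= a <= 9 ->
      balancing n = repdigit a m -> Nat.Odd m).
Proof.
  assert (even_case : forall (n m : nat) (a : Z),
      (2 <= m)%nat -> Nat.Even m -> 1 <= a <= 9 ->
      balancing n <> repdigit a m).
  { intros n m a m_ge2 [k ->] a_digit bal_eq.
    pose proof (repdigit_even_mod110 a k ltac:(lia)) as rep_mod.
    rewrite <- bal_eq, (Z.mod_small (11 * a)) in rep_mod by lia.
    assert (div110 : (110 | balancing n)).
    { apply balancing_divide11_divide110.
      rewrite (Z.div_mod (balancing n) 110), rep_mod by lia.
      exists (10 * (balancing n / 110) + a). ring. }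
    apply Z.mod_divide in div110; lia. }
  split; [exact even_case|].
  intros n m a m_ge2 a_digit bal_eq.
  destruct (Nat.Even_or_Odd m) as [m_even|m_odd]; [|exact m_odd].
  exfalso. exact (even_case n m a m_ge2 m_even a_digit bal_eq).
Qed.
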